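(* Let $f\colon\{0,1\}^n\to\{0,1\}$ be a total function with $f^{-1}(0)\neq\emptyset$. Then there exist a partial function $g\colon\{0,1\}^{2n}\to\{0,1,*\}$ and an input $z\in g^{-1}( * )$ such that \[ \min\{\mathrm{C}_{\bar 0}(g,z),\,\mathrm{C}_{\bar 1}(g,z)\}\;\ge\;\mathrm{C}_0(f)\qquad\text{and}\qquad\mathrm{C}(g)\;\le\;2\,\mathrm{UC}_1(f). \]
   Context: For a partial function $f\colon\{0,1\}^n\to\{0,1,*\}$: a partial input $\rho\in\{0,1,*\}^n$ is consistent with $x\in\{0,1\}^n$ if $\rho_i=x_i$ whenever $\rho_i\neq*$; its size $|\rho|$ is the number of non-$*$ entries. For $\Sigma\subseteq\{0,1,*\}$, $\rho$ is a $\Sigma$-certificate for $x$ if $\rho$ is consistent with $x$ and $f(x')\in\Sigma$ for all $x'$ consistent with $\rho$. $\mathrm{C}_\Sigma(f,x)$ is the least size of a $\Sigma$-certificate for $x$, and $\mathrm{C}_\Sigma(f)=\max_{x\in f^{-1}(\Sigma)}\mathrm{C}_\Sigma(f,x)$. We write $0,1,\bar0,\bar1$ for $\Sigma=\{0\},\{1\},\{1,*\},\{0,*\}$, and $\mathrm{C}(f)=\max\{\mathrm{C}_0(f),\mathrm{C}_1(f)\}$. For total $f$, $\mathrm{C}_0(f)$ is the least $k$ such that $f$ is a width-$k$ CNF, and $\mathrm{UC}_1(f)$ is the least $k$ such that $f$ can be written as an unambiguous width-$k$ DNF (every input satisfies at most one term; width = maximum number of literals in a term). *)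

From mathcomp Require Import all_boot.
Set Implicit Arguments. Unset Strict Implicit. Unset Printing Implicit Defensive.

(* Inputs x in {0,1}^n, partial inputs rho in {0,1,*}^n (None = * ),
   partial functions {0,1}^n -> {0,1,*} (None = * ). *)
Definition input (n : nat) := {ffun 'I_n -> bool}.
Definition pinput (n : nat) := {ffun 'I_n -> option bool}.

Definition consistent n (rho : pinput n) (x : input n) : bool :=
  [forall i, (rho i == None) || (rho i == Some (x i))].

Definition psize n (rho : pinput n) : nat := #|[set i | rho i != None]|.

Definition is_cert n (S : pred (option bool)) (f : input n -> option bool)
  (x : input n) (rho : pinput n) : bool :=
  consistent rho x && [forall x' : input n, consistent rho x' ==> (f x' \in S)].

(* C_Sigma(f,x): least size of a Sigma-certificate for x (meaningful when
   f x \in S, in which case the full input is a certificate of size n). *)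
Definition CSx n (S : pred (option bool)) (f : input n -> option bool)
  (x : input n) : nat :=
  \big[minn/n]_(rho : pinput n | is_cert S f x rho) psize rho.

Definition CS n (S : pred (option bool)) (f : input n -> option bool) : nat :=
  \max_(x : input n | f x \in S) CSx S f x.

Definition Sig0 : pred (option bool) := pred1 (Some false).
Definition Sig1 : pred (option bool) := pred1 (Some true).
Definition Sigb0 : pred (option bool) := [pred o | o != Some false].
Definition Sigb1 : pred (option bool) := [pred o | o != Some true].

Definition Ccomp n (f : input n -> option bool) : nat :=
  maxn (CS Sig0 f) (CS Sig1 f).

Definition tot n (f : input n -> bool) : input n -> option bool :=
  fun x => Some (f x).

(* DNF: a set of terms; a term is a partial input (its literals are the
   fixed coordinates); x satisfies the term iff it is consistent with it. *)
Definition dnf_rep n (f : input n -> bool) (D : {set pinput n}) : bool :=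
  [forall x : input n, f x == [exists t in D, consistent t x]].
Definition dnf_unamb n (D : {set pinput n}) : bool :=
  [forall x : input n, #|[set t in D | consistent t x]| <= 1].
Definition dnf_width n (D : {set pinput n}) : nat := \max_(t in D) psize t.

Definition has_udnf n (f : input n -> bool) (k : nat) : bool :=
  [exists D : {set pinput n}, [&& dnf_rep f D, dnf_unamb D & dnf_width D <= k]].

(* UC_1(f): least k with an unambiguous width-k DNF for f (always <= n,
   via the DNF of all minterms, hence the default n is never the answer
   by default only). *)
Definition UC1 n (f : input n -> bool) : nat :=
  \big[minn/n]_(k < n.+1 | has_udnf f k) k.

From mathcomp Require Import all_boot zify.
Set Implicit Arguments. Unset Strict Implicit. Unset Printing Implicit Defensive.

(* Fix an unambiguous DNF D of width k = UC_1(f) representing f; one exists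
   because the DNF of all 1-minterms is unambiguous of width n.  On inputs
   (x, y) in {0,1}^(2n) define the gadget
       g(x, y) = *   if f(x) = 0,
       g(x, y) = 0   if f(x) = 1 and x, y satisfy a common term of D,
       g(x, y) = 1   otherwise.
   Upper bound: a 0-input is certified by fixing that common term on both
   halves (2k bits); a 1-input (x, y) is certified by fixing the unique term
   t of D satisfied by x on the left half and one bit of y violating t on the
   right half (k + 1 <= 2k bits).  Hence C(g) <= 2k.
   Lower bound: let z = (a, a) where a is a 0-input of f of maximal
   0-certificate complexity.  Merging the two halves of a {0,*}- or
   {1,*}-certificate r for z yields a partial input s with |s| <= |r|
   consistent with a; if some u consistent with s had f(u) = 1, then (u, u)
   and (u, a) would both be consistent with r, yet g(u, u) = 0 and
   g(u, a) = 1, so r excludes neither value.  Thus s is a 0-certificate for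
   a, and |r| >= C_0(f, a) = C_0(f). *)

Lemma consP n (r : pinput n) (x : input n) :
  reflect (forall i b, r i = Some b -> b = x i) (consistent r x).
Proof.
apply: (iffP forallP) => H i.
  by move=> b E; move: (H i); rewrite E /= => /eqP [].
by case E: (r i) => [b|] //=; rewrite (H i b E).
Qed.

Lemma psize_le n (r : pinput n) : psize r <= n.
Proof. by rewrite /psize; apply: leq_trans (max_card _) _; rewrite card_ord. Qed.

Definition fullx n (x : input n) : pinput n := [ffun i => Some (x i)].

Lemma consistent_fullx n (x y : input n) : consistent (fullx x) y = (x == y).
Proof.
apply/consP/eqP => [H|<- i b]; last by rewrite ffunE => -[].
by apply/ffunP => i; apply: H; rewrite ffunE.
Qed.

Definition merge n (a b : pinput n) : pinput n :=
  [ffun i => if a i is Some c then Some c else b i].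

Lemma psize_merge n (a b : pinput n) : psize (merge a b) <= psize a + psize b.
Proof.
rewrite /psize; apply: leq_trans (leq_card_setU _ _); apply: subset_leq_card.
by apply/subsetP => i; rewrite !inE ffunE; case: (a i).
Qed.

Lemma consistent_merge n (a b : pinput n) (x u : input n) :
  consistent a x -> consistent b x ->
  consistent (merge a b) u = consistent a u && consistent b u.
Proof.
move=> /consP ca /consP cb; apply/consP/andP => [H|[/consP cau /consP cbu] i c].
  split; apply/consP => i c E; apply: H; rewrite ffunE.
    by rewrite E.
  by case E': (a i) => [c'|]; rewrite ?E // (ca _ _ E') (cb _ _ E).
by rewrite ffunE; case E: (a i) => [c'|]; [case=> <-; apply: cau | apply: cbu].
Qed.

Lemma bigmin_le (I : finType) (P : pred I) (F : I -> nat) idx i0 :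
  P i0 -> \big[minn/idx]_(i | P i) F i <= F i0.
Proof.
move=> Pi0; rewrite unlock; elim: (index_enum I) (mem_index_enum i0) => //= h t IH.
rewrite inE => /predU1P [<-|it]; first by rewrite Pi0 geq_minl.
by case: ifP => _; [rewrite geq_min IH ?orbT | exact: IH].
Qed.

Lemma CSx_le_cert n S (f : input n -> option bool) x r :
  is_cert S f x r -> CSx S f x <= psize r.
Proof. exact: bigmin_le. Qed.

Lemma CSx_ge n S (f : input n -> option bool) x m :
  m <= n -> (forall r, is_cert S f x r -> m <= psize r) -> m <= CSx S f x.
Proof. by move=> H1 H2; rewrite /CSx; elim/big_ind: _ => // a b Ha Hb; rewrite leq_min Ha. Qed.

Lemma CSx_le_n n S (f : input n -> option bool) x : CSx S f x <= n.
Proof. by rewrite /CSx; elim/big_ind: _ => // [a b Ha _|r _]; rewrite ?geq_min ?Ha ?psize_le. Qed.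

Section Halves.
Variable n : nat.

Let twice : 2 * n = n + n. Proof. by rewrite mul2n addnn. Qed.

Definition lo (i : 'I_n) : 'I_(2 * n) := cast_ord (esym twice) (lshift n i).
Definition hi (i : 'I_n) : 'I_(2 * n) := cast_ord (esym twice) (rshift n i).

Lemma loP (j : 'I_(2 * n)) : (exists i, j = lo i) \/ (exists i, j = hi i).
Proof.
have : j = cast_ord (esym twice) (unsplit (split (cast_ord twice j))).
  by rewrite splitK cast_ordK.
by case: (split _) => i ->; [left|right]; exists i.
Qed.

Lemma lo_inj : injective lo.
Proof. by move=> i k /(congr1 val) /= /val_inj. Qed.

Lemma hi_inj : injective hi.
Proof. by move=> i k /(congr1 val) /= /addnI /val_inj. Qed.

Lemma lo_neq_hi i k : lo i != hi k.
Proof. by apply/eqP => /(congr1 val) /=; move: (ltn_ord i); lia. Qed.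

Definition lp T (w : {ffun 'I_(2 * n) -> T}) : {ffun 'I_n -> T} := [ffun i => w (lo i)].
Definition rp T (w : {ffun 'I_(2 * n) -> T}) : {ffun 'I_n -> T} := [ffun i => w (hi i)].
Definition pr T (x y : {ffun 'I_n -> T}) : {ffun 'I_(2 * n) -> T} :=
  [ffun j => match split (cast_ord twice j) with inl i => x i | inr i => y i end].

Lemma pr_lo T (x y : {ffun 'I_n -> T}) i : pr x y (lo i) = x i.
Proof.
rewrite ffunE /lo cast_ordKV.
by change (lshift n i) with (unsplit (@inl _ 'I_n i)); rewrite unsplitK.
Qed.

Lemma pr_hi T (x y : {ffun 'I_n -> T}) i : pr x y (hi i) = y i.
Proof.
rewrite ffunE /hi cast_ordKV.
by change (rshift n i) with (unsplit (@inr 'I_n _ i)); rewrite unsplitK.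
Qed.

Lemma lp_pr T (x y : {ffun 'I_n -> T}) : lp (pr x y) = x.
Proof. by apply/ffunP => i; rewrite ffunE pr_lo. Qed.

Lemma rp_pr T (x y : {ffun 'I_n -> T}) : rp (pr x y) = y.
Proof. by apply/ffunP => i; rewrite ffunE pr_hi. Qed.

Lemma consistent_halves (r : pinput (2 * n)) (w : input (2 * n)) :
  consistent r w = consistent (lp r) (lp w) && consistent (rp r) (rp w).
Proof.
apply/idP/andP => [/forallP H | [/forallP H1 /forallP H2]].
  by split; apply/forallP => i; rewrite !ffunE; apply: H.
apply/forallP => j.
by case: (loP j) => [[i ->]|[i ->]]; [move: (H1 i)|move: (H2 i)]; rewrite !ffunE.
Qed.

Lemma psize_halves (r : pinput (2 * n)) : psize (lp r) + psize (rp r) <= psize r.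
Proof.
rewrite /psize -(card_imset _ lo_inj) -(card_imset _ hi_inj) -cardsUI.
set A := lo @: _; set B := hi @: _.
have -> : A :&: B = set0.
  apply/setP => j; rewrite !inE; apply/negbTE/andP => -[/imsetP[i _ ->] /imsetP[k _]].
  exact/eqP/lo_neq_hi.
rewrite cards0 addn0; apply: subset_leq_card; apply/subsetP => j.
by rewrite !inE => /orP[/imsetP[i]|/imsetP[i]]; rewrite inE ffunE => + ->.
Qed.

Lemma psize_pr (a b : pinput n) : psize (pr a b) <= psize a + psize b.
Proof.
rewrite /psize.
apply: leq_trans (leq_add (leq_imset_card lo _) (leq_imset_card hi _)).
apply: leq_trans (leq_card_setU _ _); apply: subset_leq_card; apply/subsetP => j.
rewrite !inE; case: (loP j) => [[i ->]|[i ->]]; rewrite ?pr_lo ?pr_hi => H.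
  by apply/orP; left; apply/imsetP; exists i; rewrite ?inE.
by apply/orP; right; apply/imsetP; exists i; rewrite ?inE.
Qed.

End Halves.

Definition minterm_dnf n (f : input n -> bool) : {set pinput n} :=
  [set fullx x | x in [pred x | f x]].

Lemma has_udnf_minterms n (f : input n -> bool) : has_udnf f n.
Proof.
apply/existsP; exists (minterm_dnf f); apply/and3P; split.
- apply/forallP => x; apply/eqP; apply/idP/idP => [fx|/existsP [_ /andP[/imsetP [y fy ->]]]].
    by apply/existsP; exists (fullx x); rewrite consistent_fullx eqxx andbT imset_f.
  by rewrite consistent_fullx => /eqP <-.
- apply/forallP => x; rewrite -(cards1 (fullx x)); apply: subset_leq_card.
  apply/subsetP => t; rewrite !inE => /andP[/imsetP [y _ ->]].
  by rewrite consistent_fullx => /eqP ->.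
- by apply/bigmax_leqP => t _; apply: psize_le.
Qed.

Lemma has_udnf_UC1 n (f : input n -> bool) : has_udnf f (UC1 f).
Proof.
rewrite /UC1; elim/big_ind: _ => [|a b Ha Hb|k //]; first exact: has_udnf_minterms.
by rewrite /minn; case: ifP.
Qed.

Definition common_term n (D : {set pinput n}) (x y : input n) : bool :=
  [exists t in D, consistent t x && consistent t y].

Definition gadget n (f : input n -> bool) (D : {set pinput n})
    (w : input (2 * n)) : option bool :=
  if f (lp w) then Some (~~ common_term D (lp w) (rp w)) else None.

Section Gadget.
Variables (n : nat) (f : input n -> bool) (D : {set pinput n}).
Hypothesis rep : dnf_rep f D.

Lemma dnf_term_sat t x : t \in D -> consistent t x -> f x.
Proof.
by move=> tD ct; move/forallP: rep => /(_ x) /eqP ->; apply/existsP; exists t; rewrite tD.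
Qed.

Lemma dnf_term_ex x : f x -> exists2 t, t \in D & consistent t x.
Proof. by move/forallP: rep => /(_ x) /eqP -> /existsP [t /andP[]]; exists t. Qed.

Lemma gadget_diag x : f x -> gadget f D (pr x x) = Some false.
Proof.
move=> fx; rewrite /gadget lp_pr rp_pr fx; have [t tD ct] := dnf_term_ex fx.
by congr Some; apply: negbF; apply/existsP; exists t; rewrite tD ct.
Qed.

Lemma gadget_offdiag x a : f x -> f a = false -> gadget f D (pr x a) = Some true.
Proof.
move=> fx fa; rewrite /gadget lp_pr rp_pr fx; congr Some.
by apply/existsP => -[t /and3P[tD _ /(dnf_term_sat tD)]]; rewrite fa.
Qed.

Lemma gadget_lower a (S : pred (option bool)) :
  f a = false -> ~~ S (Some false) || ~~ S (Some true) ->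
  CSx Sig0 (tot f) a <= CSx S (gadget f D) (pr a a).
Proof.
move=> fa HS; apply: CSx_ge => [|r /andP[cr /forallP cert]].
  by apply: leq_trans (CSx_le_n _ _ _) _; lia.
move: cr; rewrite consistent_halves lp_pr rp_pr => /andP[cl cr].
apply: leq_trans (CSx_le_cert (r := merge (lp r) (rp r)) _)
                 (leq_trans (psize_merge _ _) (psize_halves r)).
rewrite /is_cert (consistent_merge _ cl cr) cl cr /=; apply/forallP => u.
rewrite (consistent_merge _ cl cr) -topredE /= /tot; apply/implyP => /andP[cul cur].
case fu: (f u) => //; apply: (contraTT _ HS) => _; rewrite negb_or !negbK.
move: (cert (pr u u)) (cert (pr u a)); rewrite !consistent_halves !lp_pr !rp_pr.
by rewrite cul cur cr (gadget_diag fu) (gadget_offdiag fu fa) -!topredE => /= -> ->.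
Qed.

Variable k : nat.
Hypothesis width : dnf_width D <= k.

Lemma dnf_term_size t : t \in D -> psize t <= k.
Proof. by move=> tD; apply: leq_trans width; apply: leq_bigmax_cond. Qed.

(* A 0-input (x, y) is certified by fixing a common term on both halves. *)
Lemma gadget_cert0 w : gadget f D w = Some false -> CSx Sig0 (gadget f D) w <= 2 * k.
Proof.
rewrite /gadget; case fx: (f (lp w)) => // -[/negbFE /existsP [t /and3P[tD cx cy]]].
apply: leq_trans (CSx_le_cert (r := pr t t) _) (leq_trans (psize_pr t t) _).
  rewrite /is_cert consistent_halves lp_pr rp_pr cx cy; apply/forallP => w'.
  rewrite consistent_halves lp_pr rp_pr; apply/implyP => /andP[cx' cy'].
  rewrite /gadget (dnf_term_sat tD cx') -topredE /=; apply/eqP; congr Some.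
  by apply: negbF; apply/existsP; exists t; rewrite tD cx' cy'.
by move: (dnf_term_size tD); lia.
Qed.

Hypothesis unamb : dnf_unamb D.

Lemma dnf_term_unique t1 t2 x :
  t1 \in D -> t2 \in D -> consistent t1 x -> consistent t2 x -> t1 = t2.
Proof.
move=> D1 D2 c1 c2; move/forallP: unamb => /(_ x) /card_le1_eqP; apply.
  by rewrite !inE D2 c2.
by rewrite !inE D1 c1.
Qed.

(* A 1-input (x, y) is certified by fixing the unique term t of D satisfied
   by x on the left half, and one bit of y violating t on the right half. *)
Lemma gadget_cert1 w : gadget f D w = Some true -> CSx Sig1 (gadget f D) w <= 2 * k.
Proof.
rewrite /gadget; case fx: (f (lp w)) => // -[/existsP no_common].
have [t tD cx] := dnf_term_ex fx.
have [i ti ty] : exists2 i, t i != None & t i != Some (rp w i).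
  have /forallPn [i] : ~~ consistent t (rp w).
    by apply: contra_notN no_common => cy; exists t; rewrite tD cx cy.
  by rewrite negb_or => /andP[]; exists i.
set s : pinput n := [ffun j => if j == i then Some (rp w i) else None].
have size_s : psize s <= 1.
  rewrite /psize -(cards1 i); apply: subset_leq_card; apply/subsetP => j.
  by rewrite !inE ffunE; case: (j == i).
have size_t : 0 < psize t by apply/card_gt0P; exists i; rewrite inE.
apply: leq_trans (CSx_le_cert (r := pr t s) _) (leq_trans (psize_pr t s) _).
  rewrite /is_cert consistent_halves lp_pr rp_pr cx /=; apply/andP; split.
    by apply/consP => j b; rewrite ffunE; case: eqP => // -> [].
  apply/forallP => w'; rewrite consistent_halves lp_pr rp_pr.
  apply/implyP => /andP[cx' /consP cy']; rewrite (dnf_term_sat tD cx') -topredE /=.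
  apply/eqP; congr Some; apply/existsP => -[t' /and3P[t'D cx'' cy'']].
  move: cy'' ty; rewrite -(dnf_term_unique tD t'D cx' cx'') => /consP cy''.
  case E: (t i) ti => [b|] // _; rewrite (cy'' _ _ E) -(cy' i (rp w i)) ?ffunE ?eqxx //.
by move: (dnf_term_size tD); lia.
Qed.

Lemma gadget_Ccomp : Ccomp (gadget f D) <= 2 * k.
Proof.
rewrite /Ccomp geq_max; apply/andP; split; apply/bigmax_leqP => w; rewrite -topredE /=.
  by move/eqP; apply: gadget_cert0.
by move/eqP; apply: gadget_cert1.
Qed.

End Gadget.

Lemma CS_attained n S (f : input n -> option bool) x0 :
  f x0 \in S -> exists2 x, f x \in S & CS S f = CSx S f x.
Proof.
move=> Sx0; exists [arg max_(x > x0 | f x \in S) CSx S f x]; last exact: bigmax_eq_arg.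
by case: arg_maxnP.
Qed.

Theorem theorem2p2 (n : nat) (f : input n -> bool) :
  (exists x : input n, f x = false) ->
  exists (g : input (2 * n) -> option bool) (z : input (2 * n)),
    g z = None /\
    CS Sig0 (tot f) <= minn (CSx Sigb0 g z) (CSx Sigb1 g z) /\
    Ccomp g <= 2 * UC1 f.
Proof.
move=> [a0 fa0].
have [a /eqP [fa] ->] : exists2 a, tot f a \in Sig0 & CS Sig0 (tot f) = CSx Sig0 (tot f) a.
  by apply: (CS_attained (x0 := a0)); rewrite /tot fa0.
have /existsP [D /and3P [rep unamb width]] := has_udnf_UC1 f.
exists (gadget f D), (pr a a); split; first by rewrite /gadget lp_pr fa.
split; last exact: gadget_Ccomp.
by rewrite leq_min !gadget_lower // ?eqxx ?orbT.
Qed.
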